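(* Let $f\in\mathbf{SB}_n$ with $\deg(f)>1$ and $\deg(f)$ not a power of $2$. Then $\mathcal{FAI}(f)\le \deg(f)-1$.
   Context: $\mathbf{SB}_n$ is the set of symmetric Boolean functions on $n$ variables; $\deg$ is the algebraic degree. The algebraic immunity of $f\in\mathbf{B}_n$ is $\mathcal{AI}(f)=\min\{\deg(g): g\neq0,\ gf=0 \text{ or } g(f+1)=0\}$. The fast algebraic immunity is $\mathcal{FAI}(f)=\min\big(\{2\mathcal{AI}(f)\}\cup\{\deg(g)+\deg(gf): g\in\mathbf{B}_n,\ 1\le\deg(g)<\mathcal{AI}(f)\}\big)$. *)

From mathcomp Require Import all_boot.
Set Implicit Arguments. Unset Strict Implicit. Unset Printing Implicit Defensive.

Definition point (n : nat) := {ffun 'I_n -> bool}.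
Definition BF (n : nat) := {ffun point n -> bool}.

Definition wt n (x : point n) : nat := #|[set i | x i]|.

Definition covered n (x u : point n) : bool := [forall i, x i ==> u i].

(* ANF (Moebius transform) coefficient of the monomial x^u. *)
Definition anf n (f : BF n) (u : point n) : bool :=
  \big[addb/false]_(x : point n | covered x u) f x.

(* Algebraic degree: max weight of a monomial with nonzero ANF coefficient
   (deg 0 = 0 by convention). *)
Definition deg n (f : BF n) : nat := \max_(u : point n | anf f u) wt u.

Definition bmul n (g f : BF n) : BF n := [ffun x => g x && f x].
Definition bcompl n (f : BF n) : BF n := [ffun x => ~~ f x].
Definition bzero n : BF n := [ffun => false].

Definition symmetricBF n (f : BF n) : Prop :=
  forall x y : point n, wt x = wt y -> f x = f y.

(* Algebraic immunity (the defining set is always nonempty since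
   f * (f+1) = 0 and one of f, f+1 is nonzero; the default n is irrelevant). *)
Definition AI n (f : BF n) : nat :=
  \big[minn/n]_(g : BF n | (g != bzero n) &&
        ((bmul g f == bzero n) || (bmul g (bcompl f) == bzero n))) deg g.

Definition FAI n (f : BF n) : nat :=
  minn (2 * AI f)
       (\big[minn/(2 * AI f)]_(g : BF n | (1 <= deg g) && (deg g < AI f))
          (deg g + deg (bmul g f))).

From Stdlib Require Import FunctionalExtensionality.
From mathcomp Require Import all_boot zify.
Set Implicit Arguments. Unset Strict Implicit. Unset Printing Implicit Defensive.

(* A symmetric f in SB_n is determined by its value vector F (f x = F (wt x)),
   and its ANF coefficient at a monomial x^u only depends on wt u: it is
   l (wt u), where l is the binomial Moebius transform of F
   (l k = sum over j <= k of C(k, j) F j mod 2).  The transform is an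
   involution and is computed by iterated finite differences; since
   Delta^(2^t) H x = H x + H (x + 2^t), a 2^t-periodic value vector has a
   transform vanishing from index 2^t on, i.e. gives degree < 2^t.
   Write d = deg f = 2^t + r with 0 < r < 2^t (d is not a power of 2).  The
   symmetric g whose value vector is the complement of the transform of
   k |-> l (k + 2^t) has degree exactly r, and the value vector of g f is
   2^t-periodic, so deg (g f) <= 2^t - 1.  Finally FAI f is at most
   max (2 deg g, deg g + deg (g f)) for any g of degree >= 1, which here is
   at most d - 1.  The file develops the sequence transform, then the link
   with ANF and degree of symmetric functions, then the construction of g. *)

Definition moebius (l : nat -> bool) (w : nat) : bool :=
  \big[addb/false]_(k < w.+1) (odd 'C(w, k) && l k).

Definition delta (H : nat -> bool) : nat -> bool := fun x => H x (+) H x.+1.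
Definition shift (l : nat -> bool) (m : nat) : nat -> bool := fun k => l (k + m).

(* Pascal's rule, transported to the transform. *)
Lemma moebius_pascal (l : nat -> bool) m :
  \big[addb/false]_(k < m.+2) (odd 'C(m.+1, k) && l k)
  = moebius l m (+) moebius (shift l 1) m.
Proof.
rewrite big_ord_recl bin0 /=.
under eq_bigr => i _ do rewrite /bump /= binS oddD andb_addl.
rewrite big_split /= addbA; congr (addb _ _).
  rewrite /moebius big_ord_recl bin0 /=; congr (addb _ _).
  by rewrite big_ord_recr /= bin_small // andFb addbF.
by apply: eq_bigr => i _; rewrite /shift addn1.
Qed.

Lemma delta_moebius l : delta (moebius l) = moebius (shift l 1).
Proof.
apply: functional_extensionality => x; rewrite /delta.
have -> : moebius l x.+1 = moebius l x (+) moebius (shift l 1) x.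
  exact: moebius_pascal.
by rewrite addbA addbb.
Qed.

Lemma iter_delta_moebius m l : iter m delta (moebius l) = moebius (shift l m).
Proof.
elim: m => [|m IH] /=.
  by congr moebius; apply: functional_extensionality => k; rewrite /shift addn0.
rewrite IH delta_moebius; congr moebius; apply: functional_extensionality => k.
by rewrite /shift addn1 addSnnS.
Qed.

Lemma iter_delta_sum m H x :
  iter m delta H x = \big[addb/false]_(k < m.+1) (odd 'C(m, k) && H (x + k)).
Proof.
elim: m H x => [|m IH] H x.
  by rewrite big_ord_recl big_ord0 bin0 /= addn0 addbF.
rewrite iterSr IH (moebius_pascal (fun k => H (x + k))) /moebius -big_split.
by apply: eq_bigr => i _; rewrite /delta /shift addn1 addnS andb_addr.
Qed.

Lemma moebius_iter_delta m H : moebius H m = iter m delta H 0.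
Proof. by rewrite iter_delta_sum; apply: eq_bigr => i _; rewrite add0n. Qed.

Lemma moebiusK l m : moebius (moebius l) m = l m.
Proof.
rewrite moebius_iter_delta iter_delta_moebius.
by rewrite /moebius big_ord_recl big_ord0 bin0 /shift add0n addbF.
Qed.

Lemma iter_delta_pow2 t H x : iter (2 ^ t) delta H x = H x (+) H (x + 2 ^ t).
Proof.
elim: t H x => [|t IH] H x; first by rewrite expn0 /= /delta addn1.
rewrite expnS mul2n -addnn iterD IH !IH.
by rewrite -addnA addbA -(addbA (H x)) addbb addbF.
Qed.

Lemma moebius_periodic t H :
  (forall x, H (x + 2 ^ t) = H x) -> forall m, 2 ^ t <= m -> moebius H m = false.
Proof.
move=> H_per m le_m; rewrite moebius_iter_delta -(subnK le_m) iterD.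
have -> : iter (2 ^ t) delta H = (fun _ => false).
  by apply: functional_extensionality => x; rewrite iter_delta_pow2 H_per addbb.
by rewrite iter_delta_sum big1 // => k _; rewrite andbF.
Qed.

Lemma moebius_addb P Q m :
  moebius (fun k => P k (+) Q k) m = moebius P m (+) moebius Q m.
Proof. by rewrite /moebius -big_split; apply: eq_bigr => i _; rewrite andb_addr. Qed.

Lemma moebius_true m : moebius (fun _ => true) m = (m == 0).
Proof.
have -> : (fun _ : nat => true) = moebius (fun k => k == 0).
  apply: functional_extensionality => w.
  by rewrite /moebius big_ord_recl bin0 /= big1 // => i _; rewrite andbF.
exact: moebiusK.
Qed.

(* The value vector of the auxiliary function g for a symmetric f with
   ANF sequence l: the complement of the transform of l shifted by 2^t. *)
Definition companion (l : nat -> bool) (t : nat) (w : nat) : bool :=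
  ~~ moebius (shift l (2 ^ t)) w.

Section Companion.
Variables (l : nat -> bool) (t r : nat).
Hypotheses (r_lt : r < 2 ^ t) (l_above : forall k, 2 ^ t + r < k -> l k = false).

(* Its transform is [k == 0] + l (k + 2^t), so g has degree r when the ANF
   sequence l of f has degree 2^t + r. *)
Lemma moebius_companion k : moebius (companion l t) k = (k == 0) (+) l (k + 2 ^ t).
Proof.
have -> : companion l t = (fun w => true (+) moebius (shift l (2 ^ t)) w) by [].
by rewrite moebius_addb moebius_true moebiusK.
Qed.

(* Since l vanishes beyond 2^(t+1) - 1, this transform is 2^t-periodic. *)
Lemma moebius_shift_periodic w :
  moebius (shift l (2 ^ t)) (w + 2 ^ t) = moebius (shift l (2 ^ t)) w.
Proof.
have := iter_delta_pow2 t (moebius (shift l (2 ^ t))) w.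
rewrite iter_delta_moebius.
have -> : shift (shift l (2 ^ t)) (2 ^ t) = (fun _ => false).
  by apply: functional_extensionality => k; apply: l_above; rewrite /shift; lia.
rewrite /moebius big1 => [|i _]; last by rewrite andbF.
by case: (\big[addb/false]_(_ < _) _); case: (\big[addb/false]_(_ < _) _).
Qed.

(* The value vector of g f is 2^t-periodic, so g f has degree < 2^t. *)
Lemma moebius_companion_prod k : 2 ^ t <= k ->
  moebius (fun w => companion l t w && moebius l w) k = false.
Proof.
apply: moebius_periodic => x.
have f_shift : moebius l (x + 2 ^ t) = moebius l x (+) moebius (shift l (2 ^ t)) x.
  by rewrite -iter_delta_moebius iter_delta_pow2 addbA addbb.
rewrite /companion f_shift moebius_shift_periodic.
by case: (moebius _ x); case: (moebius l x).
Qed.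

End Companion.

Lemma wt_le n (x : point n) : wt x <= n.
Proof. by rewrite /wt (leq_trans (max_card _)) // card_ord. Qed.

Lemma covered_wt n (x u : point n) : covered x u -> wt x <= wt u.
Proof.
move=> /forallP cov; apply: subset_leq_card; apply/subsetP => i.
by rewrite !inE => xi; have := cov i; rewrite xi.
Qed.

Definition support n (x : point n) : {set 'I_n} := [set i | x i].

Lemma support_inj n : injective (@support n).
Proof. by move=> x y /setP E; apply/ffunP => i; have := E i; rewrite !inE. Qed.

Lemma support_indicator n (A : {set 'I_n}) : support [ffun i => i \in A] = A.
Proof. by apply/setP => i; rewrite !inE ffunE. Qed.

Lemma exists_wt n m : m <= n -> exists x : point n, wt x = m.
Proof.
move=> le_mn.
have : 0 < #|[set A : {set 'I_n} | #|A| == m]|.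
  by rewrite card_draws card_ord bin_gt0.
case/card_gt0P => A; rewrite inE => /eqP cardA.
by exists [ffun i => i \in A]; rewrite /wt -/(support _) support_indicator.
Qed.

Lemma card_covered_wt n (u : point n) k :
  #|[set x : point n | covered x u & wt x == k]| = 'C(wt u, k).
Proof.
rewrite -(card_imset _ (@support_inj n)) /wt -/(support u) -cards_draws.
apply: eq_card => A; rewrite [in RHS]inE; apply/imsetP/andP.
  case=> x; rewrite inE => /andP[/forallP cov /eqP <-] ->; split => //.
  by apply/subsetP => i; rewrite !inE => xi; have := cov i; rewrite xi.
case=> /subsetP sub /eqP cardA; exists [ffun i => i \in A]; last first.
  by rewrite support_indicator.
rewrite inE /wt -/(support _) support_indicator cardA eqxx andbT.
by apply/forallP => i; rewrite ffunE; apply/implyP => /sub; rewrite inE.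
Qed.

Lemma anf_symmetric n (h : BF n) H : (forall x, h x = H (wt x)) ->
  forall u, anf h u = moebius H (wt u).
Proof.
move=> hH u; rewrite /anf.
under eq_bigr => x _ do rewrite hH.
rewrite (partition_big (fun x => (inord (wt x) : 'I_(wt u).+1)) predT) //.
apply: eq_bigr => k _.
rewrite (eq_bigl [in [set x : point n | covered x u & wt x == k]]); last first.
  move=> x; rewrite inE; case cov: (covered x u) => //=.
  by rewrite -(inj_eq val_inj) /= inordK // ltnS covered_wt.
rewrite (eq_bigr (fun _ => H k)) => [|x]; last by rewrite inE => /andP[_ /eqP ->].
rewrite big_const card_covered_wt.
by elim: 'C(_, _) => //= c ->; case: (H k); rewrite ?andbT ?andbF.
Qed.

Lemma deg_le_anf n (h : BF n) K : (forall u, anf h u -> wt u <= K) -> deg h <= K.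
Proof. by move=> H; apply/bigmax_leqP. Qed.

Lemma anf_le_deg n (h : BF n) u : anf h u -> wt u <= deg h.
Proof. by move=> H; apply: (leq_bigmax_cond u). Qed.

Lemma deg_le_n n (h : BF n) : deg h <= n.
Proof. by apply: deg_le_anf => u _; apply: wt_le. Qed.

Lemma deg_symmetric_le n (h : BF n) H K : (forall x, h x = H (wt x)) ->
  (forall k, K < k -> moebius H k = false) -> deg h <= K.
Proof.
move=> hH H_above; apply: deg_le_anf => u; rewrite (anf_symmetric hH).
by apply: contraTT; rewrite -ltnNge => /H_above ->.
Qed.

Lemma deg_symmetric_ge n (h : BF n) H k : (forall x, h x = H (wt x)) ->
  k <= n -> moebius H k -> k <= deg h.
Proof.
move=> hH k_le Hk; have [u wu] := exists_wt k_le.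
by rewrite -wu; apply: anf_le_deg; rewrite (anf_symmetric hH) wu.
Qed.

Lemma symmetric_anf n (f : BF n) : symmetricBF f ->
  exists2 l : nat -> bool, forall x, f x = moebius l (wt x)
                         & forall k, n < k -> l k = false.
Proof.
move=> sym.
pose rep w := odflt [ffun => false] [pick x : point n | wt x == w].
have wt_rep w : w <= n -> wt (rep w) = w.
  move=> le_wn; rewrite /rep; case: pickP => [x /eqP //|none].
  by have [x wx] := exists_wt le_wn; have := none x; rewrite wx eqxx.
pose F w := f (rep w).
have fF x : f x = F (wt x) by apply: sym; rewrite wt_rep // wt_le.
exists (fun k => (k <= n) && moebius F k) => [x|k]; last by rewrite ltnNge => /negbTE ->.
rewrite fF -[LHS]moebiusK; apply: eq_bigr => i _; congr andb.
by rewrite (leq_trans _ (wt_le x)) // -ltnS.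
Qed.

Section SymmetricDegree.
Variables (n : nat) (f : BF n) (l : nat -> bool).
Hypotheses (f_l : forall x, f x = moebius l (wt x)) (l_n : forall k, n < k -> l k = false).

Lemma anf_seq_above_deg k : deg f < k -> l k = false.
Proof.
move=> lt_k; case: (leqP k n) => [k_le|]; last exact: l_n.
apply: contraTF lt_k => lk; rewrite -leqNgt.
by apply: (deg_symmetric_ge f_l k_le); rewrite moebiusK.
Qed.

Lemma anf_seq_deg : 0 < deg f -> l (deg f).
Proof.
move=> deg_gt0; apply: contraLR deg_gt0; rewrite -leqNgt leqn0 => ld.
have : deg f <= (deg f).-1.
  apply: (deg_symmetric_le f_l) => k; rewrite moebiusK => lt_k.
  have [->|ne] := eqVneq k (deg f); first exact: negbTE.
  by apply: anf_seq_above_deg; lia.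
by case: (deg f) => // d; rewrite ltnn.
Qed.

End SymmetricDegree.

Lemma pow2_split d : 1 < d -> ~ (exists k, d = 2 ^ k) ->
  exists t r, [/\ d = 2 ^ t + r, 0 < r & r < 2 ^ t].
Proof.
move=> d_gt1 not_pow2; set t := trunc_log 2 d.
have lo : 2 ^ t <= d by apply: trunc_logP => //; apply: ltn_trans d_gt1.
have hi : d < 2 ^ t.+1 by apply: trunc_log_ltn.
exists t, (d - 2 ^ t); split; first by rewrite subnKC.
  by rewrite subn_gt0 ltn_neqAle lo andbT; apply/eqP => E; apply: not_pow2; exists t.
by rewrite expnS in hi; lia.
Qed.

Lemma bigmin_le (I : finType) (P : pred I) (F : I -> nat) x i0 :
  P i0 -> \big[minn/x]_(i | P i) F i <= F i0.
Proof.
move=> Pi0; rewrite -big_filter.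
have : i0 \in [seq i <- index_enum I | P i] by rewrite mem_filter Pi0 mem_index_enum.
elim: [seq i <- index_enum I | P i] => //= a s IH; rewrite inE big_cons.
case/predU1P => [<-|/IH h]; first exact: geq_minl.
exact: leq_trans (geq_minr _ _) h.
Qed.

(* Any g of degree >= 1 bounds FAI f: either AI f <= deg g, or g is a
   candidate in the minimum defining FAI f. *)
Lemma FAI_le_pair n (f g : BF n) :
  0 < deg g -> FAI f <= maxn (2 * deg g) (deg g + deg (bmul g f)).
Proof.
move=> deg_g_gt0; rewrite /FAI; case: (leqP (AI f) (deg g)) => AI_g.
  by apply: leq_trans (geq_minl _ _) _; rewrite leq_max leq_mul2l AI_g orbT.
apply: leq_trans (geq_minr _ _) _; rewrite leq_max; apply/orP; right.
by apply: bigmin_le; rewrite deg_g_gt0 AI_g.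
Qed.

Theorem corollary6 (n : nat) (f : BF n) :
  symmetricBF f -> 1 < deg f -> ~ (exists k : nat, deg f = 2 ^ k) ->
  FAI f <= deg f - 1.
Proof.
move=> sym d_gt1 not_pow2.
have [l f_l l_n] := symmetric_anf sym.
have [t [r [d_eq r_gt0 r_lt]]] := pow2_split d_gt1 not_pow2.
have l_above k : 2 ^ t + r < k -> l k = false.
  by rewrite -d_eq; apply: anf_seq_above_deg f_l l_n k.
have l_d : l (2 ^ t + r) by rewrite -d_eq; apply: anf_seq_deg f_l l_n _; lia.
pose g : BF n := [ffun x => companion l t (wt x)].
have g_wt x : g x = companion l t (wt x) by rewrite ffunE.
have deg_g : deg g = r.
  apply/eqP; rewrite eqn_leq; apply/andP; split.
    apply: (deg_symmetric_le g_wt) => k lt_k; rewrite moebius_companion.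
    by rewrite l_above; [case: k lt_k => // k; lia | lia].
  apply: (deg_symmetric_ge g_wt); first by have := deg_le_n f; lia.
  by rewrite moebius_companion addnC l_d (negbTE (lt0n_neq0 r_gt0)).
have deg_gf : deg (bmul g f) <= 2 ^ t - 1.
  apply: (deg_symmetric_le (H := fun w => companion l t w && moebius l w)).
    by move=> x; rewrite ffunE g_wt f_l.
  by move=> k lt_k; apply: moebius_companion_prod l_above _ _; lia.
apply: leq_trans (FAI_le_pair f (g := g) _) _; first by rewrite deg_g.
by rewrite deg_g geq_max d_eq; apply/andP; split; lia.
Qed.
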